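(* Assume (A1)–(A4), let $b$ be consistent, let $\delta>0$, $\tau>1$, and $\|b^\delta-b\|\le\delta$. Then there exists a finite integer $k_\delta\ge1$ which is the first index $k\ge1$ satisfying the stopping criterion $$\rho_1^2\|Ax_k^\delta-b^\delta\|^2+\rho_2^2\|Wx_k^\delta-y_k^\delta\|^2\le\max(\rho_1^2,\rho_2^2)\tau^2\delta^2.$$ Moreover, there exist constants $c,C>0$ depending only on $\rho_2,\tau,c_0$ such that for all integers $1\le m<n<k_\delta$ and every feasible point $(\hat x,\hat y)$, $$D_{\mu_n^\delta}f(\hat y,y_n^\delta)+c\sum_{k=m}^nE_k^\delta\le D_{\mu_m^\delta}f(\hat y,y_m^\delta)+\rho_2\langle y_{m-1}^\delta-y_m^\delta,W(\hat x-x_{m+1}^\delta)\rangle+C\big(\|W(\hat x-x_m^\delta)\|^2+\|s_m^\delta\|^2+E_m^\delta\big).$$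
   Context: $\mathcal X,\mathcal Y,\mathcal H$ are real Hilbert spaces. Standing assumptions: (A1) $A:\mathcal X\to\mathcal H$ is bounded linear. (A2) $f:\mathcal Y\to(-\infty,\infty]$ is proper, lower semicontinuous and strongly convex with constant $c_0>0$: $f(ty_1+(1-t)y_2)+c_0t(1-t)\|y_1-y_2\|^2\le tf(y_1)+(1-t)f(y_2)$ for all $y_1,y_2$, $t\in[0,1]$. (A3) $W:\mathscr D(W)\subset\mathcal X\to\mathcal Y$ is a densely defined closed linear operator. (A4) There is $c_1>0$ with $\|Ax\|^2+\|Wx\|^2\ge c_1\|x\|^2$ for all $x\in\mathscr D(W)$. $\mathscr D(f)=\{y:f(y)<\infty\}$; $b$ is consistent if $b=Ax$ for some $x\in\mathscr D(W)$ with $Wx\in\mathscr D(f)$. A feasible point is a pair $(\hat x,\hat y)$ with $\hat x\in\mathscr D(W)$, $\hat y\in\mathscr D(f)$, $A\hat x=b$, $W\hat x=\hat y$. Noisy ADMM: fix $\rho_1,\rho_2>0$ and initial $y_0^\delta\in\mathcal Y$, $\lambda_0^\delta\in\mathcal H$, $\mu_0^\delta\in\mathcal Y$. For $k=0,1,\dots$: $x_{k+1}^\delta=\arg\min_{x\in\mathscr D(W)}\{\langle\lambda_k^\delta,Ax\rangle+\langle\mu_k^\delta,Wx\rangle+\frac{\rho_1}{2}\|Ax-b^\delta\|^2+\frac{\rho_2}{2}\|Wx-y_k^\delta\|^2\}$, $y_{k+1}^\delta=\arg\min_{y\in\mathcal Y}\{f(y)-\langle\mu_k^\delta,y\rangle+\frac{\rho_2}{2}\|Wx_{k+1}^\delta-y\|^2\}$,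 $\lambda_{k+1}^\delta=\lambda_k^\delta+\rho_1(Ax_{k+1}^\delta-b^\delta)$, $\mu_{k+1}^\delta=\mu_k^\delta+\rho_2(Wx_{k+1}^\delta-y_{k+1}^\delta)$. (These minimizers exist and are unique; $\mu_k^\delta\in\partial f(y_k^\delta)$ for $k\ge1$.) Notation: $r_k^\delta=Ax_k^\delta-b^\delta$, $s_k^\delta=Wx_k^\delta-y_k^\delta$, $E_k^\delta=\rho_1\|r_k^\delta\|^2+\rho_2\|s_k^\delta\|^2+\rho_2\|y_k^\delta-y_{k-1}^\delta\|^2$ for $k\ge1$. Bregman distance: for $y$ with $\mu\in\partial f(y)$, $D_\mu f(\bar y,y)=f(\bar y)-f(y)-\langle\mu,\bar y-y\rangle$. *)

From Stdlib Require Import Reals Lra Lia.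
Open Scope R_scope.

Record HilbertSpace := {
  hs_car :> Type;
  hs_zero : hs_car;
  hs_add : hs_car -> hs_car -> hs_car;
  hs_opp : hs_car -> hs_car;
  hs_scal : R -> hs_car -> hs_car;
  hs_inner : hs_car -> hs_car -> R;
  hs_add_assoc : forall u v w, hs_add u (hs_add v w) = hs_add (hs_add u v) w;
  hs_add_comm : forall u v, hs_add u v = hs_add v u;
  hs_add_0 : forall u, hs_add hs_zero u = u;
  hs_add_opp : forall u, hs_add u (hs_opp u) = hs_zero;
  hs_scal_assoc : forall a b u, hs_scal a (hs_scal b u) = hs_scal (a * b) u;
  hs_scal_1 : forall u, hs_scal 1 u = u;
  hs_scal_distr_l : forall a u v, hs_scal a (hs_add u v) = hs_add (hs_scal a u) (hs_scal a v);
  hs_scal_distr_r : forall a b u, hs_scal (a + b) u = hs_add (hs_scal a u) (hs_scal b u);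
  hs_inner_sym : forall u v, hs_inner u v = hs_inner v u;
  hs_inner_add : forall u v w, hs_inner (hs_add u v) w = hs_inner u w + hs_inner v w;
  hs_inner_scal : forall a u v, hs_inner (hs_scal a u) v = a * hs_inner u v;
  hs_inner_nonneg : forall u, 0 <= hs_inner u u;
  hs_inner_def : forall u, hs_inner u u = 0 -> u = hs_zero;
  hs_complete : forall s : nat -> hs_car,
    (forall eps, 0 < eps -> exists N, forall n m, (N <= n)%nat -> (N <= m)%nat ->
        sqrt (hs_inner (hs_add (s n) (hs_opp (s m))) (hs_add (s n) (hs_opp (s m)))) < eps) ->
    exists l, forall eps, 0 < eps -> exists N, forall n, (N <= n)%nat ->
        sqrt (hs_inner (hs_add (s n) (hs_opp l)) (hs_add (s n) (hs_opp l))) < eps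
}.

Arguments hs_zero {h}.
Arguments hs_add {h}.
Arguments hs_opp {h}.
Arguments hs_scal {h}.
Arguments hs_inner {h}.

Definition hsub {X : HilbertSpace} (u v : X) : X := hs_add u (hs_opp v).
Definition hnorm {X : HilbertSpace} (u : X) : R := sqrt (hs_inner u u).

Definition hconv {X : HilbertSpace} (s : nat -> X) (l : X) : Prop :=
  forall eps, 0 < eps -> exists N, forall n, (N <= n)%nat -> hnorm (hsub (s n) l) < eps.

Definition bounded_linear {X H : HilbertSpace} (A : X -> H) : Prop :=
  (forall u v, A (hs_add u v) = hs_add (A u) (A v)) /\
  (forall a u, A (hs_scal a u) = hs_scal a (A u)) /\
  (exists M, forall u, hnorm (A u) <= M * hnorm u).

(** (A3) densely defined closed linear operator W with domain D (values of W
    outside D are irrelevant). *)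
Definition densely_defined_closed {X Y : HilbertSpace} (D : X -> Prop) (W : X -> Y) : Prop :=
  D hs_zero /\
  (forall u v, D u -> D v -> D (hs_add u v)) /\
  (forall a u, D u -> D (hs_scal a u)) /\
  (forall u v, D u -> D v -> W (hs_add u v) = hs_add (W u) (W v)) /\
  (forall a u, D u -> W (hs_scal a u) = hs_scal a (W u)) /\
  (forall u eps, 0 < eps -> exists v, D v /\ hnorm (hsub u v) < eps) /\
  (forall (s : nat -> X) u v, (forall n, D (s n)) -> hconv s u -> hconv (fun n => W (s n)) v ->
     D u /\ W u = v).

(** An extended-real-valued function f : Y -> (-oo, +oo] is represented by its
    effective domain domf and a real-valued f, with f = +oo outside domf. *)

(** proper and lower semicontinuous: for every y and every real t < f(y),
    f > t on a neighbourhood of y. *)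
Definition proper_lsc {Y : HilbertSpace} (domf : Y -> Prop) (f : Y -> R) : Prop :=
  (exists y, domf y) /\
  (forall y t, (~ domf y \/ t < f y) ->
     exists eps, 0 < eps /\ forall z, hnorm (hsub z y) < eps -> (~ domf z \/ t < f z)).

(** (A2) strong convexity with constant c0 (trivially true, in extended
    arithmetic, when y1 or y2 is outside the domain). *)
Definition strongly_convex {Y : HilbertSpace} (domf : Y -> Prop) (f : Y -> R) (c0 : R) : Prop :=
  forall y1 y2 t, domf y1 -> domf y2 -> 0 <= t <= 1 ->
    domf (hs_add (hs_scal t y1) (hs_scal (1 - t) y2)) /\
    f (hs_add (hs_scal t y1) (hs_scal (1 - t) y2)) + c0 * t * (1 - t) * (hnorm (hsub y1 y2)) ^ 2
      <= t * f y1 + (1 - t) * f y2.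

Definition consistent {X Y H : HilbertSpace} (A : X -> H) (D : X -> Prop) (W : X -> Y)
  (domf : Y -> Prop) (b : H) : Prop :=
  exists x, D x /\ domf (W x) /\ A x = b.

Definition feasible {X Y H : HilbertSpace} (A : X -> H) (D : X -> Prop) (W : X -> Y)
  (domf : Y -> Prop) (b : H) (xh : X) (yh : Y) : Prop :=
  D xh /\ domf yh /\ A xh = b /\ W xh = yh.

Definition bregman {Y : HilbertSpace} (f : Y -> R) (mu : Y) (ybar y : Y) : R :=
  f ybar - f y - hs_inner mu (hsub ybar y).

(** The noisy ADMM iteration: the sequences x, y, lam, mu (with arbitrary
    initial values y 0, lam 0, mu 0; x 0 unused) satisfy the ADMM recursion. *)
Definition noisy_admm {X Y H : HilbertSpace} (A : X -> H) (D : X -> Prop) (W : X -> Y)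
  (domf : Y -> Prop) (f : Y -> R) (rho1 rho2 : R) (bd : H)
  (x : nat -> X) (y : nat -> Y) (lam : nat -> H) (mu : nat -> Y) : Prop :=
  forall k : nat,
    (D (x (S k)) /\
     forall z, D z ->
       hs_inner (lam k) (A (x (S k))) + hs_inner (mu k) (W (x (S k)))
       + rho1 / 2 * (hnorm (hsub (A (x (S k))) bd)) ^ 2
       + rho2 / 2 * (hnorm (hsub (W (x (S k))) (y k))) ^ 2
       <= hs_inner (lam k) (A z) + hs_inner (mu k) (W z)
       + rho1 / 2 * (hnorm (hsub (A z) bd)) ^ 2
       + rho2 / 2 * (hnorm (hsub (W z) (y k))) ^ 2) /\
    (domf (y (S k)) /\
     forall z, domf z ->
       f (y (S k)) - hs_inner (mu k) (y (S k)) + rho2 / 2 * (hnorm (hsub (W (x (S k))) (y (S k)))) ^ 2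
       <= f z - hs_inner (mu k) z + rho2 / 2 * (hnorm (hsub (W (x (S k))) z)) ^ 2) /\
    lam (S k) = hs_add (lam k) (hs_scal rho1 (hsub (A (x (S k))) bd)) /\
    mu (S k) = hs_add (mu k) (hs_scal rho2 (hsub (W (x (S k))) (y (S k)))).

Definition stop_crit {X Y H : HilbertSpace} (A : X -> H) (W : X -> Y) (rho1 rho2 tau delta : R)
  (bd : H) (x : nat -> X) (y : nat -> Y) (k : nat) : Prop :=
  rho1 ^ 2 * (hnorm (hsub (A (x k)) bd)) ^ 2 + rho2 ^ 2 * (hnorm (hsub (W (x k)) (y k))) ^ 2
  <= Rmax (rho1 ^ 2) (rho2 ^ 2) * tau ^ 2 * delta ^ 2.

Definition first_stop {X Y H : HilbertSpace} (A : X -> H) (W : X -> Y) (rho1 rho2 tau delta : R)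
  (bd : H) (x : nat -> X) (y : nat -> Y) (kd : nat) : Prop :=
  (1 <= kd)%nat /\ stop_crit A W rho1 rho2 tau delta bd x y kd /\
  forall k, (1 <= k)%nat -> (k < kd)%nat -> ~ stop_crit A W rho1 rho2 tau delta bd x y k.

(** E_k^delta (used for k >= 1) *)
Definition Ek {X Y H : HilbertSpace} (A : X -> H) (W : X -> Y) (rho1 rho2 : R) (bd : H)
  (x : nat -> X) (y : nat -> Y) (k : nat) : R :=
  rho1 * (hnorm (hsub (A (x k)) bd)) ^ 2 + rho2 * (hnorm (hsub (W (x k)) (y k))) ^ 2
  + rho2 * (hnorm (hsub (y k) (y (k - 1)%nat))) ^ 2.

Definition sum_range (m n : nat) (g : nat -> R) : R :=
  sum_f_R0 (fun i => g (m + i)%nat) (n - m).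

(* For k >= 1 the y-step makes mu_k a subgradient of f at y_k with margin
   c0 |.|^2, and the x-step gives A^* lam_k + W^* mu_k = - rho2 W^* (y_k - y_{k-1})
   on D(W).  Comparing consecutive steps, E_k is nonincreasing and its decrease
   dominates 4 c0 |y_{k+1} - y_k|^2 + rho2 |W (x_{k+1} - x_k) - (y_k - y_{k-1})|^2.
   Comparing with a feasible point, and absorbing the noise into the residuals
   while the discrepancy rule fails, the Bregman distances D_k satisfy
   D_{k+1} - D_k + c E_{k+1} <= rho2 <u_{k+1} - u_k, W (xh - x_{k+1})> with
   u_k = y_k - y_{k-1}.  Summation by parts leaves a boundary term and cross
   terms, which Young's inequality bounds through E_m and the summed
   dissipation.  If the rule never stopped, the partial sums of E_k would stay
   bounded although E_k > rho1 tau^2 delta^2 for every k. *)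

From Stdlib Require Import Reals Lra Lia Classical Wf_nat.
Open Scope R_scope.

Section InnerProduct.
Context {X : HilbertSpace}.
Implicit Types u v w p q : X.

Lemma inner_zero_l v : hs_inner hs_zero v = 0.
Proof.
  pose proof (hs_inner_add X hs_zero hs_zero v) as E.
  rewrite hs_add_0 in E; lra.
Qed.

Lemma inner_opp_l u v : hs_inner (hs_opp u) v = - hs_inner u v.
Proof.
  pose proof (hs_inner_add X u (hs_opp u) v) as E.
  rewrite hs_add_opp, inner_zero_l in E; lra.
Qed.

Lemma inner_zero_r v : hs_inner v hs_zero = 0.
Proof. rewrite hs_inner_sym; apply inner_zero_l. Qed.

Lemma inner_opp_r u v : hs_inner u (hs_opp v) = - hs_inner u v.
Proof. rewrite !(hs_inner_sym X u); apply inner_opp_l. Qed.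

Lemma inner_add_r u v w : hs_inner u (hs_add v w) = hs_inner u v + hs_inner u w.
Proof. rewrite !(hs_inner_sym X u); apply hs_inner_add. Qed.

Lemma inner_scal_r a u v : hs_inner u (hs_scal a v) = a * hs_inner u v.
Proof. rewrite !(hs_inner_sym X u); apply hs_inner_scal. Qed.

Lemma hnorm_sq u : hnorm u ^ 2 = hs_inner u u.
Proof. apply pow2_sqrt, hs_inner_nonneg. Qed.

Lemma hsub_eq0 u v : hs_inner (hsub u v) (hsub u v) = 0 -> u = v.
Proof.
  intros E%hs_inner_def; unfold hsub in E.
  rewrite <- (hs_add_0 X v), <- E, <- hs_add_assoc, (hs_add_comm X (hs_opp v)), hs_add_opp.
  now rewrite hs_add_comm, hs_add_0.
Qed.

End InnerProduct.

(* Expands inner products of sums, differences and multiples into real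
   expressions in the inner products of the atoms; [inner_sym] then merges
   [<a, b>] and [<b, a>], so that [lra]/[nra] can finish. *)
Ltac inner_expand := unfold hsub in *;
  repeat rewrite ?hs_inner_add, ?inner_add_r, ?hs_inner_scal, ?inner_scal_r,
                 ?inner_opp_l, ?inner_opp_r, ?inner_zero_l, ?inner_zero_r.

Ltac inner_sym := repeat match goal with |- context [@hs_inner ?X ?a ?b] =>
  match goal with |- context [@hs_inner X b a] =>
    tryif constr_eq a b then fail else rewrite (hs_inner_sym X b a) end end.

Section InnerProductInequalities.
Context {X : HilbertSpace}.
Implicit Types u v p q : X.

Lemma hs_opp_scal u : hs_opp u = hs_scal (-1) u.
Proof. apply hsub_eq0; inner_expand; lra. Qed.

Lemma inner_le_young a p q : 0 < a ->
  hs_inner p q <= (a * hs_inner p p + / a * hs_inner q q) / 2.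
Proof.
  intro Ha; pose proof (hs_inner_nonneg X (hsub (hs_scal a p) q)) as N.
  revert N; inner_expand; inner_sym; intro N.
  assert (0 <= / a * (a * a * hs_inner p p - 2 * a * hs_inner p q + hs_inner q q)).
  { apply Rmult_le_pos; [apply Rlt_le, Rinv_0_lt_compat|]; lra. }
  replace (/ a * (a * a * hs_inner p p - 2 * a * hs_inner p q + hs_inner q q))
    with (a * hs_inner p p - 2 * hs_inner p q + / a * hs_inner q q) in * by (field; lra).
  lra.
Qed.

Lemma inner_ge_young a p q : 0 < a ->
  - hs_inner p q <= (a * hs_inner p p + / a * hs_inner q q) / 2.
Proof.
  intro Ha; pose proof (inner_le_young a p (hs_opp q) Ha) as Y.
  revert Y; inner_expand; lra.
Qed.

Lemma inner_self_le_sub p q :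
  hs_inner p p <= 2 * hs_inner (hsub p q) (hsub p q) + 2 * hs_inner q q.
Proof.
  pose proof (hs_inner_nonneg X (hsub p (hs_scal 2 q))) as N.
  revert N; inner_expand; inner_sym; lra.
Qed.

End InnerProductInequalities.

Lemma linear_coef_eq0 (g h : R) : (forall t, 0 <= g * t + h * (t * t)) -> g = 0.
Proof.
  intro Hq; destruct (Req_dec g 0) as [|Hg]; [assumption | exfalso].
  set (a := Rabs h + 1).
  assert (Ha : h < a) by (pose proof (Rle_abs h); unfold a; lra).
  assert (Ha0 : 0 < a) by (pose proof (Rabs_pos h); unfold a; lra).
  specialize (Hq (- g / (2 * a))).
  replace (g * (- g / (2 * a)) + h * (- g / (2 * a) * (- g / (2 * a))))
    with ((g * g) * (h - 2 * a) / (4 * a * a)) in Hq by (field; lra).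
  assert (0 < g * g) by (apply Rsqr_pos_lt; auto).
  assert (0 < / (4 * a * a)) by (apply Rinv_0_lt_compat; nra).
  assert (g * g * (h - 2 * a) < 0) by nra.
  unfold Rdiv in Hq; nra.
Qed.

Lemma nonneg_of_nonneg_add_small (a b : R) :
  (forall t, 0 < t <= 1 -> 0 <= a + t * b) -> 0 <= a.
Proof.
  intro Hq; apply Rnot_lt_le; intro Ha.
  set (t := - a / (Rabs b - a)).
  pose proof (Rle_abs b); pose proof (Rabs_pos b).
  assert (Ht : 0 < t <= 1).
  { unfold t; split; [apply Rdiv_lt_0_compat; lra|].
    apply Rmult_le_reg_r with (Rabs b - a); [lra|].
    unfold t; replace (- a / (Rabs b - a) * (Rabs b - a)) with (- a) by (field; lra).
    lra. }
  specialize (Hq t Ht).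
  assert (t * Rabs b < - a).
  { replace (- a) with (t * (Rabs b - a)) by (unfold t; field; lra). nra. }
  nra.
Qed.

Lemma nonpos_of_linear_bound (a M : R) : (forall N : nat, INR N * a <= M) -> a <= 0.
Proof.
  intro Hbound; apply Rnot_lt_le; intro Ha.
  destruct (INR_unbounded (M / a)) as [N HN].
  specialize (Hbound N).
  assert (M / a * a < INR N * a) by (apply Rmult_lt_compat_r; lra).
  replace (M / a * a) with M in * by (field; lra).
  lra.
Qed.

Lemma first_index_ge1 (P : nat -> Prop) : (exists k, (1 <= k)%nat /\ P k) ->
  exists kd, (1 <= kd)%nat /\ P kd /\ forall k, (1 <= k)%nat -> (k < kd)%nat -> ~ P k.
Proof.
  intro Hex.
  destruct (dec_inh_nat_subset_has_unique_least_element _ (fun k => classic _) Hex)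
    as [kd [[[Hkd Hs] Hmin] _]].
  exists kd; repeat split; auto.
  intros k Hk Hlt Hsk; specialize (Hmin k (conj Hk Hsk)); lia.
Qed.

Lemma Rinv_in_01 t : 1 < t -> 0 < / t < 1.
Proof.
  split; [apply Rinv_0_lt_compat; lra|].
  rewrite <- Rinv_1; apply Rinv_1_lt_contravar; lra.
Qed.

Lemma Rmax_sq_bound (r1 r2 T Nr Ns : R) : 0 < r1 -> 0 < r2 -> 0 <= Nr -> 0 <= Ns ->
  Rmax (r1 ^ 2) (r2 ^ 2) * T < r1 ^ 2 * Nr + r2 ^ 2 * Ns -> r1 * T < r1 * Nr + r2 * Ns.
Proof.
  intros H1 H2 HNr HNs HT.
  destruct (Rle_dec r1 r2) as [Hle | Hlt].
  - rewrite Rmax_right in HT by (apply pow_incr; lra).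
    assert (r1 * (r1 * Nr) <= r2 * (r1 * Nr)) by (apply Rmult_le_compat_r; nra).
    assert (r2 * (r2 * T) < r2 * (r1 * Nr + r2 * Ns)) by nra.
    assert (r2 * T < r1 * Nr + r2 * Ns) by nra.
    destruct (Rle_dec 0 T); nra.
  - rewrite Rmax_left in HT by (apply pow_incr; lra).
    assert (r2 * (r2 * Ns) <= r1 * (r2 * Ns)) by (apply Rmult_le_compat_r; nra).
    assert (r1 * (r1 * T) < r1 * (r1 * Nr + r2 * Ns)) by nra.
    nra.
Qed.

Fixpoint sum_from (g : nat -> R) (m l : nat) : R :=
  match l with
  | O => 0
  | S l => sum_from g m l + g (m + l)%nat
  end.

Section Sums.
Implicit Types (g h : nat -> R) (m l : nat).

Lemma sum_from_le g h m l :
  (forall k, (m <= k < m + l)%nat -> g k <= h k) -> sum_from g m l <= sum_from h m l.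
Proof.
  induction l as [|l IH]; intro Hgh; simpl; [lra|].
  assert (g (m + l)%nat <= h (m + l)%nat) by (apply Hgh; lia).
  enough (sum_from g m l <= sum_from h m l) by lra.
  apply IH; intros; apply Hgh; lia.
Qed.

Lemma sum_from_ext g h m l :
  (forall k, (m <= k < m + l)%nat -> g k = h k) -> sum_from g m l = sum_from h m l.
Proof.
  induction l as [|l IH]; intro Hgh; simpl; [reflexivity|].
  rewrite IH by (intros; apply Hgh; lia).
  now rewrite (Hgh (m + l)%nat) by lia.
Qed.

Lemma sum_from_nonneg g m l : (forall k, (m <= k)%nat -> 0 <= g k) -> 0 <= sum_from g m l.
Proof.
  intro Hg; induction l as [|l IH]; simpl; [lra|].
  assert (0 <= g (m + l)%nat) by (apply Hg; lia); lra.
Qed.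

Lemma sum_from_add g h m l :
  sum_from (fun k => g k + h k) m l = sum_from g m l + sum_from h m l.
Proof. induction l; simpl; lra. Qed.

Lemma sum_from_scal a g m l : sum_from (fun k => a * g k) m l = a * sum_from g m l.
Proof. induction l as [|l IH]; simpl; [ring|]; rewrite IH; ring. Qed.

Lemma sum_from_opp g m l : sum_from (fun k => - g k) m l = - sum_from g m l.
Proof. induction l as [|l IH]; simpl; [|rewrite IH]; ring. Qed.

Lemma sum_from_const a m l : sum_from (fun _ => a) m l = INR l * a.
Proof. induction l as [|l IH]; [simpl; ring|]; simpl sum_from; rewrite IH, S_INR; ring. Qed.

Lemma sum_from_telescope g m l : sum_from (fun k => g k - g (S k)) m l = g m - g (m + l)%nat.
Proof.
  induction l as [|l IH]; simpl; [rewrite Nat.add_0_r; lra|].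
  rewrite IH, Nat.add_succ_r; lra.
Qed.

Lemma sum_from_succ g m l : sum_from g m (S l) = g m + sum_from g (S m) l.
Proof.
  induction l as [|l IH]; [simpl; rewrite Nat.add_0_r; lra|].
  change (sum_from g m (S (S l))) with (sum_from g m (S l) + g (m + S l)%nat).
  rewrite IH; simpl; rewrite Nat.add_succ_r; lra.
Qed.

Lemma sum_from_shift g m l : sum_from (fun k => g (S k)) m l = sum_from g (S m) l.
Proof. induction l as [|l IH]; simpl; [|rewrite IH]; reflexivity. Qed.

Lemma sum_range_sum_from g m n : sum_range m n g = sum_from g m (S (n - m)).
Proof.
  unfold sum_range; induction (n - m)%nat as [|l IH]; simpl; [lra|].
  now rewrite IH.
Qed.

End Sums.

Definition decay_rate (c0 rho2 tau : R) : R := (1 - / tau) * (c0 / (c0 + rho2)).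

Definition estimate_const (c0 rho2 tau : R) : R :=
  rho2 / 2 + 1 / 2 + rho2 / (4 * c0) / 2
  + (/ decay_rate c0 rho2 tau / 2 + 1 / 2) * (4 + 2 * (rho2 / (4 * c0)))
  + decay_rate c0 rho2 tau / 2.

Lemma decay_rate_spec c0 rho2 tau : 0 < c0 -> 0 < rho2 -> 1 < tau ->
  0 < decay_rate c0 rho2 tau /\ decay_rate c0 rho2 tau <= 1 - / tau
  /\ decay_rate c0 rho2 tau * rho2 <= c0.
Proof.
  intros Hc0 Hr2 Ht; unfold decay_rate.
  assert (0 < / tau < 1) by (apply Rinv_in_01; lra).
  assert (0 < c0 / (c0 + rho2)) by (apply Rdiv_lt_0_compat; lra).
  assert (c0 / (c0 + rho2) * (c0 + rho2) = c0) by (field; lra).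
  assert (c0 / (c0 + rho2) * rho2 <= c0) by nra.
  assert (c0 / (c0 + rho2) <= 1) by nra.
  split; [|split]; nra.
Qed.

Lemma estimate_const_pos c0 rho2 tau : 0 < c0 -> 0 < rho2 -> 1 < tau ->
  0 < estimate_const c0 rho2 tau.
Proof.
  intros Hc0 Hr2 Ht; destruct (decay_rate_spec c0 rho2 tau Hc0 Hr2 Ht) as [Hc _].
  assert (0 < / decay_rate c0 rho2 tau) by (apply Rinv_0_lt_compat; lra).
  assert (0 < rho2 / (4 * c0)) by (apply Rdiv_lt_0_compat; lra).
  unfold estimate_const; nra.
Qed.

Section ADMM.
Variables (X Y H : HilbertSpace) (A : X -> H) (D : X -> Prop) (W : X -> Y)
  (domf : Y -> Prop) (f : Y -> R) (c0 rho1 rho2 : R) (bd : H)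
  (x : nat -> X) (y : nat -> Y) (lam : nat -> H) (mu : nat -> Y).
Hypothesis A_add : forall u v, A (hs_add u v) = hs_add (A u) (A v).
Hypothesis A_scal : forall a u, A (hs_scal a u) = hs_scal a (A u).
Hypothesis D_add : forall u v, D u -> D v -> D (hs_add u v).
Hypothesis D_scal : forall a u, D u -> D (hs_scal a u).
Hypothesis W_add : forall u v, D u -> D v -> W (hs_add u v) = hs_add (W u) (W v).
Hypothesis W_scal : forall a u, D u -> W (hs_scal a u) = hs_scal a (W u).
Hypothesis f_strongly_convex : strongly_convex domf f c0.
Hypotheses (c0_pos : 0 < c0) (rho1_pos : 0 < rho1) (rho2_pos : 0 < rho2).
Hypothesis admm : noisy_admm A D W domf f rho1 rho2 bd x y lam mu.

Local Notation E := (Ek A W rho1 rho2 bd x y).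

Lemma A_sub u v : A (hsub u v) = hsub (A u) (A v).
Proof. unfold hsub; now rewrite !hs_opp_scal, A_add, A_scal. Qed.

Lemma D_sub u v : D u -> D v -> D (hsub u v).
Proof. intros; unfold hsub; rewrite hs_opp_scal; auto. Qed.

Lemma W_sub u v : D u -> D v -> W (hsub u v) = hsub (W u) (W v).
Proof. intros; unfold hsub; rewrite !hs_opp_scal, W_add, W_scal; auto. Qed.

Lemma x_in_D k : D (x (S k)).
Proof. apply (admm k). Qed.

Lemma y_in_domf k : domf (y (S k)).
Proof. apply (admm k). Qed.

Lemma lam_succ k : lam (S k) = hs_add (lam k) (hs_scal rho1 (hsub (A (x (S k))) bd)).
Proof. apply (admm k). Qed.

Lemma mu_succ k : mu (S k) = hs_add (mu k) (hs_scal rho2 (hsub (W (x (S k))) (y (S k)))).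
Proof. apply (admm k). Qed.

Lemma x_step_optimality k z : D z ->
  hs_inner (lam (S k)) (A z) + hs_inner (mu (S k)) (W z)
  + rho2 * hs_inner (hsub (y (S k)) (y k)) (W z) = 0.
Proof.
  intro Dz; destruct (admm k) as [[Dx x_min] _].
  assert (Q : forall t, 0 <= (hs_inner (lam k) (A z) + hs_inner (mu k) (W z)
     + rho1 * hs_inner (hsub (A (x (S k))) bd) (A z)
     + rho2 * hs_inner (hsub (W (x (S k))) (y k)) (W z)) * t
     + (rho1 / 2 * hs_inner (A z) (A z) + rho2 / 2 * hs_inner (W z) (W z)) * (t * t)).
  { intro t; specialize (x_min (hs_add (x (S k)) (hs_scal t z)) (D_add _ _ Dx (D_scal t z Dz))).
    rewrite A_add, A_scal, W_add, W_scal, !hnorm_sq in x_min by auto.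
    revert x_min; inner_expand; inner_sym; lra. }
  apply linear_coef_eq0 in Q.
  rewrite lam_succ, mu_succ; revert Q; inner_expand; inner_sym; lra.
Qed.

Lemma y_step_subgradient k z : domf z ->
  f (y (S k)) + hs_inner (mu (S k)) (hsub z (y (S k)))
  + c0 * hs_inner (hsub z (y (S k))) (hsub z (y (S k))) <= f z.
Proof.
  intro Fz; destruct (admm k) as [_ [[Fy y_min] _]].
  set (e := hsub z (y (S k))).
  enough (Q : forall t, 0 < t <= 1 ->
    0 <= (f z - f (y (S k)) - hs_inner (mu (S k)) e - c0 * hs_inner e e)
         + t * ((c0 + rho2 / 2) * hs_inner e e))
    by (apply nonneg_of_nonneg_add_small in Q; lra).
  intros t Ht; destruct (f_strongly_convex z (y (S k)) t Fz Fy ltac:(lra)) as [Fzt conv].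
  specialize (y_min _ Fzt); rewrite !hnorm_sq in *.
  apply (Rmult_le_reg_l t); [lra|]; rewrite Rmult_0_r.
  unfold e; rewrite mu_succ; revert conv y_min; inner_expand; inner_sym; lra.
Qed.

Lemma bregman_nonneg yh k : domf yh -> 0 <= bregman f (mu (S k)) yh (y (S k)).
Proof.
  intro Fh; pose proof (y_step_subgradient k yh Fh).
  pose proof (hs_inner_nonneg _ (hsub yh (y (S k)))).
  unfold bregman; nra.
Qed.

Definition res_A k := hsub (A (x k)) bd.
Definition res_W k := hsub (W (x k)) (y k).
Definition dy k := hsub (y k) (y (k - 1)%nat).
Definition dWx k := hsub (W (x (S k))) (W (x k)).

Lemma Ek_inner k : E k = rho1 * hs_inner (res_A k) (res_A k)
  + rho2 * hs_inner (res_W k) (res_W k) + rho2 * hs_inner (dy k) (dy k).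
Proof. unfold Ek, res_A, res_W, dy; now rewrite !hnorm_sq. Qed.

Lemma dy_sq_le_Ek k : rho2 * hs_inner (dy k) (dy k) <= E k.
Proof.
  rewrite Ek_inner; pose proof (hs_inner_nonneg _ (res_A k));
    pose proof (hs_inner_nonneg _ (res_W k)); nra.
Qed.

Lemma Ek_nonneg k : 0 <= E k.
Proof. pose proof (dy_sq_le_Ek k); pose proof (hs_inner_nonneg _ (dy k)); nra. Qed.

Lemma Ek_decrease k : (1 <= k)%nat ->
  E (S k) + 4 * c0 * hs_inner (dy (S k)) (dy (S k))
  + rho2 * hs_inner (hsub (dWx k) (dy k)) (hsub (dWx k) (dy k)) <= E k.
Proof.
  destruct k as [|j]; [lia|]; intros _; rewrite !Ek_inner.
  pose proof (D_sub _ _ (x_in_D (S j)) (x_in_D j)) as Ddx.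
  pose proof (x_step_optimality (S j) _ Ddx) as opt1.
  pose proof (x_step_optimality j _ Ddx) as opt0.
  pose proof (y_step_subgradient (S j) (y (S j)) (y_in_domf j)) as sub1.
  pose proof (y_step_subgradient j (y (S (S j))) (y_in_domf (S j))) as sub0.
  assert (dres_sq : 0 <= rho1 * hs_inner (hsub (res_A (S (S j))) (res_A (S j)))
                                (hsub (res_A (S (S j))) (res_A (S j))))
    by (apply Rmult_le_pos; [lra | apply hs_inner_nonneg]).
  assert (dy_sq : 0 <= c0 * hs_inner (dy (S (S j))) (dy (S (S j))))
    by (apply Rmult_le_pos; [lra | apply hs_inner_nonneg]).
  rewrite A_sub, W_sub in opt1, opt0 by apply x_in_D.
  rewrite lam_succ, mu_succ in opt1; rewrite mu_succ in sub1.
  unfold res_A, res_W, dy, dWx in *; rewrite !Nat.sub_succ, !Nat.sub_0_r in *.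
  revert opt1 opt0 sub1 sub0 dres_sq dy_sq; inner_expand; inner_sym; intros; lra.
Qed.

Lemma Ek_antitone k d : (1 <= k)%nat -> E (k + d)%nat <= E k.
Proof.
  intro Hk; induction d as [|d IH]; [rewrite Nat.add_0_r; lra|].
  rewrite Nat.add_succ_r.
  pose proof (Ek_decrease (k + d) ltac:(lia)).
  pose proof (hs_inner_nonneg _ (dy (S (k + d)))).
  pose proof (hs_inner_nonneg _ (hsub (dWx (k + d)) (dy (k + d)))).
  nra.
Qed.

Lemma sum_dissipation m l : (1 <= m)%nat ->
  sum_from (fun k => 4 * c0 * hs_inner (dy (S k)) (dy (S k))
                     + rho2 * hs_inner (hsub (dWx k) (dy k)) (hsub (dWx k) (dy k))) m l
  <= E m - E (m + l)%nat.
Proof.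
  intro Hm; rewrite <- sum_from_telescope; apply sum_from_le; intros k Hk.
  pose proof (Ek_decrease k ltac:(lia)); lra.
Qed.

Lemma sum_dy_sq_le m l : (1 <= m)%nat ->
  sum_from (fun k => rho2 * hs_inner (dy k) (dy k)) (S m) l <= rho2 / (4 * c0) * E m.
Proof.
  intro Hm; pose proof (sum_dissipation m l Hm) as diss.
  rewrite sum_from_add in diss.
  assert (0 <= sum_from (fun k => rho2 * hs_inner (hsub (dWx k) (dy k)) (hsub (dWx k) (dy k))) m l)
    by (apply sum_from_nonneg; intros; apply Rmult_le_pos; [lra | apply hs_inner_nonneg]).
  pose proof (Ek_nonneg (m + l)).
  rewrite <- sum_from_shift.
  replace (sum_from (fun k => rho2 * hs_inner (dy (S k)) (dy (S k))) m l)
    with (rho2 / (4 * c0) * sum_from (fun k => 4 * c0 * hs_inner (dy (S k)) (dy (S k))) m l)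
    by (rewrite <- sum_from_scal; apply sum_from_ext; intros; field; lra).
  apply Rmult_le_compat_l; [apply Rlt_le, Rdiv_lt_0_compat |]; lra.
Qed.

Lemma sum_dWx_sq_le m l : (1 <= m)%nat ->
  sum_from (fun k => rho2 * hs_inner (dWx k) (dWx k)) m (S l)
  <= (4 + 2 * (rho2 / (4 * c0))) * E m.
Proof.
  intro Hm.
  set (Dd := sum_from (fun k => rho2 * hs_inner (hsub (dWx k) (dy k)) (hsub (dWx k) (dy k))) m (S l)).
  set (Uy := sum_from (fun k => rho2 * hs_inner (dy k) (dy k)) m (S l)).
  assert (split : sum_from (fun k => rho2 * hs_inner (dWx k) (dWx k)) m (S l) <= 2 * Dd + 2 * Uy).
  { unfold Dd, Uy; rewrite <- !sum_from_scal, <- sum_from_add.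
    apply sum_from_le; intros k _; pose proof (inner_self_le_sub (dWx k) (dy k)); nra. }
  assert (Dd_le : Dd <= E m).
  { pose proof (sum_dissipation m (S l) Hm) as diss; rewrite sum_from_add in diss.
    assert (0 <= sum_from (fun k => 4 * c0 * hs_inner (dy (S k)) (dy (S k))) m (S l))
      by (apply sum_from_nonneg; intros; apply Rmult_le_pos; [lra | apply hs_inner_nonneg]).
    pose proof (Ek_nonneg (m + S l)); fold Dd in diss; lra. }
  assert (Uy_le : Uy <= E m + rho2 / (4 * c0) * E m).
  { unfold Uy; rewrite sum_from_succ.
    pose proof (dy_sq_le_Ek m); pose proof (sum_dy_sq_le m l Hm); lra. }
  lra.
Qed.

Lemma sum_cross_le m l : (1 <= m)%nat ->
  sum_from (fun k => rho2 * hs_inner (dy k) (dWx k)) (S m) l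
  <= rho2 / (4 * c0) / 2 * E m + / 2 * sum_from (fun k => rho2 * hs_inner (dWx k) (dWx k)) m (S l).
Proof.
  intro Hm.
  apply Rle_trans with (/ 2 * sum_from (fun k => rho2 * hs_inner (dy k) (dy k)) (S m) l
    + / 2 * sum_from (fun k => rho2 * hs_inner (dWx k) (dWx k)) (S m) l).
  { rewrite <- !sum_from_scal, <- sum_from_add; apply sum_from_le; intros k _.
    pose proof (inner_le_young 1 (dy k) (dWx k) ltac:(lra)); rewrite Rinv_1 in *; nra. }
  rewrite (sum_from_succ _ m l).
  pose proof (sum_dy_sq_le m l Hm).
  assert (0 <= rho2 * hs_inner (dWx m) (dWx m))
    by (apply Rmult_le_pos; [lra | apply hs_inner_nonneg]).
  lra.
Qed.

Lemma unstopped_residual_gt tau delta k :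
  ~ stop_crit A W rho1 rho2 tau delta bd x y k ->
  rho1 * (tau ^ 2 * delta ^ 2)
  < rho1 * hs_inner (res_A k) (res_A k) + rho2 * hs_inner (res_W k) (res_W k).
Proof.
  unfold stop_crit, res_A, res_W; rewrite !hnorm_sq; intros Hs%Rnot_le_lt.
  apply Rmax_sq_bound; try apply hs_inner_nonneg; auto.
  rewrite Rmult_assoc in Hs; exact Hs.
Qed.

Lemma Ek_gt_unstopped tau delta k :
  ~ stop_crit A W rho1 rho2 tau delta bd x y k -> rho1 * (tau ^ 2 * delta ^ 2) < E k.
Proof.
  intro Hs; pose proof (unstopped_residual_gt tau delta k Hs).
  pose proof (hs_inner_nonneg _ (dy k)); rewrite Ek_inner; nra.
Qed.

Section Feasible.
Variables (b : H) (xh : X) (yh : Y) (tau delta : R).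
Hypotheses (xh_in_D : D xh) (A_xh : A xh = b) (W_xh : W xh = yh).
Hypotheses (tau_gt1 : 1 < tau) (noise : hnorm (hsub bd b) <= delta).

Local Notation B k := (bregman f (mu k) yh (y k)).
Local Notation stopped k := (stop_crit A W rho1 rho2 tau delta bd x y k).
Local Notation c := (decay_rate c0 rho2 tau).

Definition dist_W k := hsub (W xh) (W (x k)).

Lemma bregman_step k : (1 <= k)%nat ->
  B (S k) - B k
  <= - (c0 * hs_inner (dy (S k)) (dy (S k)))
     - rho1 * hs_inner (res_A (S k)) (res_A (S k))
     - rho2 * hs_inner (res_W (S k)) (res_W (S k))
     - rho1 * hs_inner (res_A (S k)) (hsub bd b)
     + rho2 * hs_inner (hsub (dy (S k)) (dy k)) (dist_W (S k)).
Proof.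
  destruct k as [|j]; [lia|]; intros _.
  pose proof (D_sub _ _ (x_in_D (S j)) xh_in_D) as Ddx.
  pose proof (x_step_optimality (S j) _ Ddx) as opt1.
  pose proof (x_step_optimality j _ Ddx) as opt0.
  pose proof (y_step_subgradient j (y (S (S j))) (y_in_domf (S j))) as sub0.
  rewrite A_sub, W_sub in opt1, opt0 by (apply x_in_D || assumption).
  rewrite lam_succ, mu_succ in opt1; unfold bregman; rewrite mu_succ.
  unfold dist_W, res_A, res_W, dy in *; rewrite !Nat.sub_succ, !Nat.sub_0_r, A_xh, W_xh in *.
  revert opt1 opt0 sub0; inner_expand; inner_sym; intros; lra.
Qed.

(* Young's inequality with weight [1/tau], and the residual dominating
   [tau delta] before stopping, absorb the noise into the residuals. *)
Lemma noise_term_le k : ~ stopped k ->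
  - (rho1 * hs_inner (res_A k) (hsub bd b))
  <= / tau * (rho1 * hs_inner (res_A k) (res_A k))
     + / (2 * tau) * (rho2 * hs_inner (res_W k) (res_W k)).
Proof.
  intro Hs; pose proof (unstopped_residual_gt tau delta k Hs) as Hgt.
  pose proof (inner_ge_young (/ tau) (res_A k) (hsub bd b)
    ltac:(apply Rinv_0_lt_compat; lra)) as young.
  rewrite Rinv_inv in young.
  assert (hs_inner (hsub bd b) (hsub bd b) <= delta ^ 2).
  { rewrite <- hnorm_sq; apply pow_incr; split; [apply sqrt_pos | exact noise]. }
  assert (rho1 * (tau * delta ^ 2) = / tau * (rho1 * (tau ^ 2 * delta ^ 2))) by (field; lra).
  replace (/ (2 * tau)) with (/ tau / 2) by (field; lra).
  assert (0 < / tau) by (apply Rinv_0_lt_compat; lra).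
  assert (- (rho1 * hs_inner (res_A k) (hsub bd b))
          <= rho1 * ((/ tau * hs_inner (res_A k) (res_A k) + tau * delta ^ 2) / 2)).
  { rewrite Ropp_mult_distr_r; apply Rmult_le_compat_l; [lra|].
    assert (tau * hs_inner (hsub bd b) (hsub bd b) <= tau * delta ^ 2)
      by (apply Rmult_le_compat_l; lra).
    lra. }
  assert (/ tau * (rho1 * (tau ^ 2 * delta ^ 2))
          <= / tau * (rho1 * hs_inner (res_A k) (res_A k) + rho2 * hs_inner (res_W k) (res_W k)))
    by (apply Rmult_le_compat_l; lra).
  lra.
Qed.

Lemma bregman_step_unstopped k : (1 <= k)%nat -> ~ stopped (S k) ->
  B (S k) - B k + c * E (S k)
  <= rho2 * hs_inner (hsub (dy (S k)) (dy k)) (dist_W (S k)).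
Proof.
  intros Hk Hs; pose proof (bregman_step k Hk) as step.
  pose proof (noise_term_le (S k) Hs) as noise_le.
  destruct (decay_rate_spec c0 rho2 tau c0_pos rho2_pos tau_gt1) as [c_pos [c_le c_rho2]].
  assert (0 < / tau < 1) by (apply Rinv_in_01; lra).
  replace (/ (2 * tau)) with (/ tau / 2) in noise_le by (field; lra).
  rewrite Ek_inner.
  set (Nr := hs_inner (res_A (S k)) (res_A (S k))) in *.
  set (Ns := hs_inner (res_W (S k)) (res_W (S k))) in *.
  set (Nu := hs_inner (dy (S k)) (dy (S k))) in *.
  assert (0 <= (1 - / tau - c) * (rho1 * Nr))
    by (apply Rmult_le_pos; [|apply Rmult_le_pos, hs_inner_nonneg]; lra).
  assert (0 <= (1 - / tau / 2 - c) * (rho2 * Ns))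
    by (apply Rmult_le_pos; [|apply Rmult_le_pos, hs_inner_nonneg]; lra).
  assert (0 <= (c0 - c * rho2) * Nu)
    by (apply Rmult_le_pos; [|apply hs_inner_nonneg]; lra).
  lra.
Qed.

(* Summation by parts of the right-hand sides of [bregman_step_unstopped]. *)
Lemma bregman_sum_by_parts m L : (1 <= m)%nat ->
  (forall k, (m < k <= m + S L)%nat -> ~ stopped k) ->
  B (m + S L)%nat - rho2 * hs_inner (dy (m + S L)) (dist_W (m + S L))
  + c * sum_from E (S m) (S L)
  <= B m - rho2 * hs_inner (dy m) (dist_W (S m))
     + sum_from (fun k => rho2 * hs_inner (dy k) (dWx k)) (S m) L.
Proof.
  intros Hm Hstop; induction L as [|L IH].
  - pose proof (bregman_step_unstopped m Hm ltac:(apply Hstop; lia)) as step.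
    simpl sum_from; rewrite Nat.add_0_r, Nat.add_1_r.
    revert step; inner_expand; lra.
  - specialize (IH ltac:(intros; apply Hstop; lia)).
    pose proof (bregman_step_unstopped (m + S L) ltac:(lia) ltac:(apply Hstop; lia)) as step.
    cbn [sum_from] in IH |- *; rewrite ?Nat.add_succ_l, ?Nat.add_succ_r in *.
    revert step IH; unfold dWx, dist_W; inner_expand; intros; lra.
Qed.

Lemma last_cross_le m L : (1 <= m)%nat ->
  rho2 * hs_inner (dy (m + S L)) (dist_W (m + S L))
  <= / 2 * E m + / 2 * (rho2 * hs_inner (dist_W m) (dist_W m))
     + c / 2 * sum_from E (S m) (S L)
     + / c / 2 * sum_from (fun k => rho2 * hs_inner (dWx k) (dWx k)) m (S L).
Proof.
  intro Hm; remember (m + S L)%nat as n eqn:Hn.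
  destruct (decay_rate_spec c0 rho2 tau c0_pos rho2_pos tau_gt1) as [c_pos _].
  assert (dy_n : rho2 * hs_inner (dy n) (dy n) <= E m).
  { pose proof (dy_sq_le_Ek n); pose proof (Ek_antitone m (S L) Hm); subst n; lra. }
  assert (telescope : rho2 * hs_inner (dy n) (dist_W n)
    = rho2 * hs_inner (dy n) (dist_W m)
      - sum_from (fun k => rho2 * hs_inner (dy n) (dWx k)) m (S L)).
  { rewrite (sum_from_ext _ (fun k => rho2 * hs_inner (dy n) (dist_W k)
                                     - rho2 * hs_inner (dy n) (dist_W (S k))))
      by (intros; unfold dWx, dist_W; inner_expand; lra).
    rewrite sum_from_telescope, <- Hn; lra. }
  assert (first : rho2 * hs_inner (dy n) (dist_W m)
    <= / 2 * E m + / 2 * (rho2 * hs_inner (dist_W m) (dist_W m))).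
  { pose proof (inner_le_young 1 (dy n) (dist_W m) ltac:(lra)); rewrite Rinv_1 in *; nra. }
  assert (rest : - sum_from (fun k => rho2 * hs_inner (dy n) (dWx k)) m (S L)
    <= c / 2 * sum_from E (S m) (S L)
       + / c / 2 * sum_from (fun k => rho2 * hs_inner (dWx k) (dWx k)) m (S L)).
  { rewrite <- sum_from_shift, <- !sum_from_scal, <- sum_from_add, <- sum_from_opp.
    apply sum_from_le; intros k Hk.
    pose proof (inner_ge_young c (dy n) (dWx k) c_pos).
    pose proof (dy_sq_le_Ek n); pose proof (Ek_antitone (S k) (n - S k) ltac:(lia)).
    replace (S k + (n - S k))%nat with n in * by lia.
    assert (0 < / c) by (apply Rinv_0_lt_compat; lra).
    nra. }
  lra.
Qed.

Lemma energy_estimate m L : (1 <= m)%nat ->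
  (forall k, (m < k <= m + S L)%nat -> ~ stopped k) ->
  B (m + S L)%nat + c / 2 * sum_from E m (S (S L))
  <= B m - rho2 * hs_inner (dy m) (dist_W (S m))
     + estimate_const c0 rho2 tau
       * (hs_inner (dist_W m) (dist_W m) + hs_inner (res_W m) (res_W m) + E m).
Proof.
  intros Hm Hstop.
  pose proof (bregman_sum_by_parts m L Hm Hstop) as parts.
  pose proof (last_cross_le m L Hm) as last.
  pose proof (sum_cross_le m L Hm) as cross.
  pose proof (sum_dWx_sq_le m L Hm) as dWx_sq.
  destruct (decay_rate_spec c0 rho2 tau c0_pos rho2_pos tau_gt1) as [c_pos _].
  set (Sw := sum_from (fun k => rho2 * hs_inner (dWx k) (dWx k)) m (S L)) in *.
  assert ((/ c / 2 + / 2) * Sw <= (/ c / 2 + / 2) * ((4 + 2 * (rho2 / (4 * c0))) * E m)).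
  { apply Rmult_le_compat_l; [|exact dWx_sq].
    assert (0 < / c) by (apply Rinv_0_lt_compat; lra); lra. }
  pose proof (estimate_const_pos c0 rho2 tau c0_pos rho2_pos tau_gt1) as C_pos.
  assert (0 <= (estimate_const c0 rho2 tau - rho2 / 2) * hs_inner (dist_W m) (dist_W m)).
  { apply Rmult_le_pos; [|apply hs_inner_nonneg].
    unfold estimate_const; pose proof (Ek_nonneg m).
    assert (0 < / c) by (apply Rinv_0_lt_compat; lra).
    assert (0 < rho2 / (4 * c0)) by (apply Rdiv_lt_0_compat; lra).
    nra. }
  assert (0 <= estimate_const c0 rho2 tau * hs_inner (res_W m) (res_W m))
    by (apply Rmult_le_pos; [lra | apply hs_inner_nonneg]).
  assert (0 <= rho2 * E m) by (apply Rmult_le_pos; [lra | apply Ek_nonneg]).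
  rewrite sum_from_succ; unfold estimate_const in *.
  lra.
Qed.

End Feasible.

Lemma estimate_before_stop b tau delta kd :
  1 < tau -> hnorm (hsub bd b) <= delta ->
  first_stop A W rho1 rho2 tau delta bd x y kd ->
  forall m n : nat, (1 <= m)%nat -> (m < n)%nat -> (n < kd)%nat ->
  forall (xh : X) (yh : Y), feasible A D W domf b xh yh ->
    bregman f (mu n) yh (y n) + decay_rate c0 rho2 tau / 2 * sum_range m n E
    <= bregman f (mu m) yh (y m)
       + rho2 * hs_inner (hsub (y (m - 1)%nat) (y m)) (W (hsub xh (x (S m))))
       + estimate_const c0 rho2 tau
         * ((hnorm (W (hsub xh (x m)))) ^ 2 + (hnorm (hsub (W (x m)) (y m))) ^ 2 + E m).
Proof.
  intros Ht Hn [_ [_ Hfirst]] m n Hm Hmn Hnk xh yh [Dxh [_ [Axh Wxh]]].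
  replace n with (m + S (n - m - 1))%nat in * by lia.
  pose proof (energy_estimate b xh yh tau delta Dxh Axh Wxh Ht Hn m (n - m - 1) Hm
    ltac:(intros; apply Hfirst; lia)) as estimate.
  destruct m as [|p]; [lia|].
  rewrite sum_range_sum_from, !hnorm_sq, !W_sub by auto using x_in_D.
  replace (S (S p + S (n - S p - 1) - S p)) with (S (S (n - S p - 1))) by lia.
  revert estimate; unfold dy, dist_W, res_W; inner_expand; intro; lra.
Qed.

Lemma stop_index_exists b tau delta :
  1 < tau -> 0 < delta -> hnorm (hsub bd b) <= delta -> consistent A D W domf b ->
  exists kd, first_stop A W rho1 rho2 tau delta bd x y kd.
Proof.
  intros Ht Hd Hn [xh [Dxh [Fxh Axh]]].
  apply first_index_ge1, NNPP; intro Hnone.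
  assert (unstopped : forall k, (1 <= k)%nat -> ~ stop_crit A W rho1 rho2 tau delta bd x y k)
    by (intros k Hk Hsk; apply Hnone; exists k; split; assumption).
  destruct (decay_rate_spec c0 rho2 tau c0_pos rho2_pos Ht) as [c_pos _].
  set (c := decay_rate c0 rho2 tau) in *; set (K := rho1 * (tau ^ 2 * delta ^ 2)).
  assert (K_pos : 0 < K)
    by (unfold K; apply Rmult_lt_0_compat; [|apply Rmult_lt_0_compat; apply pow_lt]; lra).
  set (M := bregman f (mu 1%nat) (W xh) (y 1%nat)
            - rho2 * hs_inner (dy 1) (dist_W xh 2)
            + estimate_const c0 rho2 tau
              * (hs_inner (dist_W xh 1) (dist_W xh 1) + hs_inner (res_W 1) (res_W 1) + E 1%nat)).
  (* The partial sums of E are bounded by M, while each term exceeds K. *)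
  enough (bounded : forall N, INR N * (c / 2 * K) <= M).
  { apply nonpos_of_linear_bound in bounded.
    assert (0 < c / 2 * K) by (apply Rmult_lt_0_compat; lra); lra. }
  intro N.
  pose proof (energy_estimate b xh (W xh) tau delta Dxh Axh eq_refl Ht Hn 1 N
    ltac:(lia) ltac:(intros; apply unstopped; lia)) as estimate.
  change (1 + S N)%nat with (S (S N)) in estimate; fold c in estimate.
  pose proof (bregman_nonneg (W xh) (S N) Fxh).
  assert (INR (S (S N)) * K <= sum_from E 1 (S (S N))).
  { rewrite <- (sum_from_const K 1); apply sum_from_le; intros k Hk.
    apply Rlt_le, (Ek_gt_unstopped tau delta k), unstopped; lia. }
  assert (c / 2 * (INR (S (S N)) * K) <= c / 2 * sum_from E 1 (S (S N)))
    by (apply Rmult_le_compat_l; lra).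
  rewrite !S_INR in *; unfold M; nra.
Qed.

End ADMM.

Theorem lemma2p10 :
  forall (rho2 tau c0 : R), 0 < rho2 -> 1 < tau -> 0 < c0 ->
  exists c C : R, 0 < c /\ 0 < C /\
  forall (X Y H : HilbertSpace) (A : X -> H) (D : X -> Prop) (W : X -> Y)
    (domf : Y -> Prop) (f : Y -> R) (c1 rho1 delta : R) (b bd : H)
    (x : nat -> X) (y : nat -> Y) (lam : nat -> H) (mu : nat -> Y),
    bounded_linear A ->
    proper_lsc domf f -> strongly_convex domf f c0 ->
    densely_defined_closed D W ->
    0 < c1 ->
    (forall u, D u -> (hnorm (A u)) ^ 2 + (hnorm (W u)) ^ 2 >= c1 * (hnorm u) ^ 2) ->
    consistent A D W domf b ->
    0 < rho1 -> 0 < delta ->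
    hnorm (hsub bd b) <= delta ->
    noisy_admm A D W domf f rho1 rho2 bd x y lam mu ->
    (exists kd : nat, first_stop A W rho1 rho2 tau delta bd x y kd) /\
    (forall kd : nat, first_stop A W rho1 rho2 tau delta bd x y kd ->
     forall m n : nat, (1 <= m)%nat -> (m < n)%nat -> (n < kd)%nat ->
     forall (xh : X) (yh : Y), feasible A D W domf b xh yh ->
       bregman f (mu n) yh (y n)
       + c * sum_range m n (Ek A W rho1 rho2 bd x y)
       <= bregman f (mu m) yh (y m)
          + rho2 * hs_inner (hsub (y (m - 1)%nat) (y m)) (W (hsub xh (x (S m))))
          + C * ((hnorm (W (hsub xh (x m)))) ^ 2
                 + (hnorm (hsub (W (x m)) (y m))) ^ 2
                 + Ek A W rho1 rho2 bd x y m)).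
Proof.
  intros rho2 tau c0 Hr2 Ht Hc0.
  exists (decay_rate c0 rho2 tau / 2), (estimate_const c0 rho2 tau).
  destruct (decay_rate_spec c0 rho2 tau Hc0 Hr2 Ht) as [c_pos _].
  split; [lra|]; split; [now apply estimate_const_pos|].
  intros X Y H A D W domf f c1 rho1 delta b bd x y lam mu [A_add [A_scal _]] _ Hconvex
    [_ [D_add [D_scal [W_add [W_scal _]]]]] _ _ Hcons Hr1 Hd Hnoise Hadmm.
  split.
  - eapply stop_index_exists; eauto.
  - intro kd; eapply estimate_before_stop; eauto.
Qed.
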